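(* Let $\Omega$ be the closure of a bounded domain in $\mathbb{R}^d$, let $X$ be a Banach space of functions on $\Omega$ with $C(\Omega)\subset X$ and $\|g\|_X\le C_X\|g\|_{C(\Omega)}$ for $g\in C(\Omega)$, and let $K$ be a compact subset of $C(\Omega)$. Let ${\bf x}=(x_1,\dots,x_m)\in\Omega^m$, $f\in K$, $w:=\lambda_{\bf x}(f)$, and assume $R(K_w)_X\neq0$. Define on $C(\Omega)$ $$\mathcal{L}'_K(g):=\|\lambda_{\bf x}(g)-w\|+\operatorname{dist}(g,K)_{C(\Omega)} .$$ Let $C>2$ and let $\delta>0$ satisfy $$C_X\varepsilon+2R(K(w,2\varepsilon))_X\le C\,R(K_w)_X,\qquad\varepsilon:=2\delta$$ (this holds for all sufficiently small $\delta$). Let $\Sigma\subset C(\Omega)$ satisfy $\operatorname{dist}(K,\Sigma)_{C(\Omega)}<\delta$ and let $\hat f\in\mathop{\rm argmin}_{g\in\Sigma}\mathcal{L}'_K(g)$ be any minimizer. Then $\|f-\hat f\|_X\le C\,R(K_w)_X$.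
   Context: $\lambda_{\bf x}(g):=(g(x_1),\dots,g(x_m))$; on $\mathbb{R}^m$, $\|v\|:=\big[\frac1m\sum_{j=1}^m|v_j|^2\big]^{1/2}$. $\operatorname{dist}(g,K)_{C(\Omega)}:=\inf_{h\in K}\|g-h\|_{C(\Omega)}$; for $A,B\subset C(\Omega)$, $\operatorname{dist}(A,B)_{C(\Omega)}:=\sup_{a\in A}\inf_{b\in B}\|a-b\|_{C(\Omega)}$. $K_{w'}:=\{h\in K:\lambda_{\bf x}(h)=w'\}$, $K(w,\varepsilon):=\bigcup_{w'\in\mathbb{R}^m,\ \|w'-w\|\le\varepsilon}K_{w'}$. For $S\subset X$, $R(S)_X:=\inf\{r:\ S\subset B(z,r)_X\text{ for some }z\in X\}$ (Chebyshev radius in $X$). *)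

From HB Require Import structures.
From mathcomp Require Import all_boot all_order all_algebra.
From mathcomp Require Import all_classical all_reals all_analysis.
Set Implicit Arguments. Unset Strict Implicit. Unset Printing Implicit Defensive.
Import Order.TTheory GRing.Theory Num.Theory.
Import numFieldNormedType.Exports.
Local Open Scope classical_set_scope.
Local Open Scope ring_scope.

Section defs.
Variables (R : realType) (d m : nat).
Notation pt := 'rV[R]_d.

Definition closure_of_bounded_domain (Om : set pt) : Prop :=
  exists D : set pt, [/\ open D, connected D, D !=set0, bounded_set D & Om = closure D].

(* C(Omega): functions continuous on Omega (only their values on Omega matter) *)
Definition contOn (Om : set pt) (g : pt -> R) : Prop := {within Om, continuous g}.

Definition supnorm (Om : set pt) (g : pt -> R) : R := sup [set `|g x| | x in Om].

Definition distC (Om : set pt) (g : pt -> R) (K : set (pt -> R)) : R :=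
  inf [set supnorm Om (g \- h) | h in K].

Definition distCset (Om : set pt) (A B : set (pt -> R)) : R :=
  sup [set distC Om a B | a in A].

Definition compactC (Om : set pt) (K : set (pt -> R)) : Prop :=
  (forall g, K g -> contOn Om g) /\ compact (K : set {uniform` Om -> R}).

Definition lam (x : 'I_m -> pt) (g : pt -> R) : 'I_m -> R := fun j => g (x j).

Definition vnorm (v : 'I_m -> R) : R := Num.sqrt (m%:R^-1 * \sum_(j < m) `|v j| ^+ 2).

Definition vsub (v w : 'I_m -> R) : 'I_m -> R := fun j => v j - w j.

Definition Kfib (x : 'I_m -> pt) (K : set (pt -> R)) (w' : 'I_m -> R) : set (pt -> R) :=
  [set h | K h /\ lam x h = w'].

Definition Knbhd (x : 'I_m -> pt) (K : set (pt -> R)) (w : 'I_m -> R) (eps : R)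
  : set (pt -> R) :=
  \bigcup_(w' in [set w' | vnorm (vsub w' w) <= eps]) Kfib x K w'.

Definition chebR (X : normedModType R) (iota : (pt -> R) -> X) (S : set (pt -> R)) : R :=
  inf [set r | exists z : X, forall g, S g -> `|iota g - z| <= r].

Definition Lprime (Om : set pt) (x : 'I_m -> pt) (K : set (pt -> R)) (w : 'I_m -> R)
  (g : pt -> R) : R :=
  vnorm (vsub (lam x g) w) + distC Om g K.

End defs.

From HB Require Import structures.
From mathcomp Require Import all_boot all_order all_algebra.
From mathcomp Require Import all_classical all_reals all_analysis.
From mathcomp Require Import lra.
Set Implicit Arguments.
Unset Strict Implicit.
Unset Printing Implicit Defensive.
Import Order.TTheory GRing.Theory Num.Theory.
Import numFieldNormedType.Exports.
Local Open Scope classical_set_scope.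
Local Open Scope ring_scope.

(* Some g in Sigma is uniformly delta-close to f, so L'_K(g) < 2 delta, hence
   L'_K(fhat) < 2 delta by minimality.  Then fhat is uniformly 2 delta-close to
   some h in K whose data lambda_x(h) lie within 4 delta = 2 eps of w (the crude
   bound ||a + b||^2 <= 2 ||a||^2 + 2 ||b||^2 on the data norm suffices).  So f
   and h both lie in K(w, 2 eps), whence ||f - h||_X <= 2 R(K(w, 2 eps))_X, while
   ||h - fhat||_X <= C_X 2 delta; the choice of delta bounds the sum by
   C R(K_w)_X. *)

Lemma bounded_set_ub (R : realType) (V : normedModType R) (A : set V) :
  bounded_set A -> exists M, forall p, A p -> `|p| <= M.
Proof. by case=> M [_ AM]; exists (M + 1) => p; apply: AM; rewrite ltrDl. Qed.

Lemma closure_of_bounded_domain_compact (R : realType) (d : nat) (Om : set 'rV[R]_d) :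
  closure_of_bounded_domain Om -> compact Om.
Proof.
case=> D [_ _ _ /bounded_set_ub [M DM] ->].
pose B := closed_ball_ Num.norm (0 : 'rV[R]_d) `|M|.
have DB : D `<=` B.
  move=> p /DM; rewrite /B /closed_ball_ /= sub0r normrN => /le_trans; apply.
  exact: ler_norm.
have clDB : closure D `<=` B.
  have clB : closed B by exact: closed_closed_ball_.
  by rewrite ((closure_id _).1 clB); exact: closureS.
apply: bounded_closed_compact; last exact: closed_closure.
exists `|M|; split=> [|r lt_Mr p /clDB]; first exact: num_real.
by rewrite /B /closed_ball_ /= sub0r normrN => /le_trans; apply; exact: ltW.
Qed.

Section sup_norm.
Variables (R : realType) (d : nat) (Om : set 'rV[R]_d).
Hypothesis Om_compact : compact Om.

Lemma contOn_bounded (g : 'rV[R]_d -> R) :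
  contOn Om g -> exists B, forall y, Om y -> `|g y| <= B.
Proof.
move=> /continuous_compact /(_ Om_compact) /compact_bounded /bounded_set_ub [B gB].
by exists B => y Om_y; apply: gB; exists y.
Qed.

Lemma contOnB (g h : 'rV[R]_d -> R) : contOn Om g -> contOn Om h -> contOn Om (g \- h).
Proof. by move=> cg ch y; apply: cvgB; [exact: cg | exact: ch]. Qed.

Lemma contOnZ (a : R) (g : 'rV[R]_d -> R) : contOn Om g -> contOn Om (fun y => a * g y).
Proof. by move=> cg y; apply: cvgM; [exact: cvg_cst | exact: cg]. Qed.

Lemma supnorm_ge0 (g : 'rV[R]_d -> R) : 0 <= supnorm Om g.
Proof.
rewrite /supnorm; have [gsup | /sup_out -> //] := pselect (has_sup [set `|g y| | y in Om]).
have [_ [y Om_y _]] := gsup.1.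
by apply: le_trans (normr_ge0 (g y)) (sup_upper_bound gsup _); exists y.
Qed.

Lemma le_supnorm (g : 'rV[R]_d -> R) y : contOn Om g -> Om y -> `|g y| <= supnorm Om g.
Proof.
move=> /contOn_bounded [B gB] Om_y; apply: ub_le_sup; last by exists y.
by exists B => _ [z Om_z <-]; exact: gB.
Qed.

Lemma le_supnormB (g h : 'rV[R]_d -> R) y : contOn Om g -> contOn Om h -> Om y ->
  `|g y - h y| <= supnorm Om (g \- h).
Proof. by move=> cg ch /(le_supnorm (contOnB cg ch)). Qed.

Lemma supnorm_le (g : 'rV[R]_d -> R) B :
  0 <= B -> (forall y, Om y -> `|g y| <= B) -> supnorm Om g <= B.
Proof.
move=> B_ge0 gB; have [[y Om_y] | /set0P/negP/negPn/eqP Om0] := pselect (Om !=set0).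
  by apply: ge_sup; [exists `|g y|, y | move=> _ [z Om_z <-]; exact: gB].
by rewrite /supnorm Om0 image_set0 sup0.
Qed.

Lemma supnormBC (g h : 'rV[R]_d -> R) : supnorm Om (g \- h) = supnorm Om (h \- g).
Proof.
rewrite /supnorm; congr sup.
by apply/seteqP; split=> _ [y Om_y <-]; exists y; rewrite //= distrC.
Qed.

End sup_norm.

Section distance.
Variables (R : realType) (d : nat) (Om : set 'rV[R]_d).
Hypothesis Om_compact : compact Om.

Lemma distC_le (a g : 'rV[R]_d -> R) (S : set ('rV[R]_d -> R)) :
  S g -> distC Om a S <= supnorm Om (a \- g).
Proof.
move=> Sg; apply: ge_inf; last by exists g.
by exists 0 => _ [h _ <-]; exact: supnorm_ge0.
Qed.

Lemma distC_lt (a : 'rV[R]_d -> R) (S : set ('rV[R]_d -> R)) r :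
  S !=set0 -> distC Om a S < r -> exists2 g, S g & supnorm Om (a \- g) < r.
Proof.
move=> [g0 Sg0] /inf_lt [|_ [g Sg <-]]; last by exists g.
by exists (supnorm Om (a \- g0)), g0.
Qed.

Lemma compactC_bounded (K : set ('rV[R]_d -> R)) :
  compactC Om K -> exists M, forall a, K a -> forall y, Om y -> `|a y| <= M.
Proof.
(* Each a in K bounds its uniform 1-neighbourhood by sup |a| + 1; the
   near-covering form of compactness turns these into one bound for all of K. *)
move=> [K_cont /compact_near_coveringP K_cover].
have [|M [_ KM]] := K_cover R (pinfty_nbhs R)
  (fun M (a : {uniform` Om -> R}) => forall y, Om y -> `|a y| <= M) _.
  move=> a Ka; have [B aB] := contOn_bounded Om_compact (K_cont a Ka).
  near=> b M.
  have BM : B + 1 <= M by near: M; apply: nbhs_pinfty_ge; exact: num_real.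
  have ab1 : forall y, Om y -> ball (a y) 1 (b y).
    near: b; apply: (proj2 (uniform_nbhs a _)).
    exists [set p : R * R | ball p.1 1 p.2].
    by split=> [|b //]; exact: (@entourage_ball R R 1%:pos).
  move=> y Om_y; apply: le_trans BM; have /= ab := ab1 y Om_y.
  rewrite -[b y](subKr (a y)); apply: le_trans (ler_normB _ _) _.
  by rewrite lerD ?aB ?ltW.
by exists (M + 1) => a Ka; apply: KM => //; rewrite ltrDl.
Unshelve. all: by end_near.
Qed.

Lemma distCset_near (A B : set ('rV[R]_d -> R)) (a g0 : 'rV[R]_d -> R) M r :
  (forall a, A a -> forall y, Om y -> `|a y| <= M) -> B g0 -> contOn Om g0 ->
  A a -> distCset Om A B < r -> exists2 g, B g & supnorm Om (a \- g) < r.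
Proof.
move=> AM Bg0 /(contOn_bounded Om_compact) [N g0N] Aa ABr.
apply: distC_lt; first by exists g0.
apply: le_lt_trans ABr; apply: ub_le_sup; last by exists a.
exists (`|M| + `|N|) => _ [a' Aa' <-].
apply: le_trans (distC_le _ Bg0) (supnorm_le _ _) => // y Om_y /=.
apply: le_trans (ler_normB _ _) (lerD _ _).
  exact: le_trans (AM a' Aa' y Om_y) (ler_norm _).
exact: le_trans (g0N y Om_y) (ler_norm _).
Qed.

End distance.

Section chebyshev_radius.
Variables (R : realType) (d : nat) (X : normedModType R) (iota : ('rV[R]_d -> R) -> X).
Variable S : set ('rV[R]_d -> R).

Lemma chebR_ge0 g : S g -> 0 <= chebR iota S.
Proof.
move=> Sg; rewrite /chebR; set T := [set r | _].
have [[r0 Tr0] | T0] := pselect (T !=set0).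
  by apply: lb_le_inf => [|r [z zr]]; [exists r0 | exact: le_trans (zr g Sg)].
rewrite (_ : T = set0) ?inf0 //.
by apply/seteqP; split=> // r Tr; apply: T0; exists r.
Qed.

Lemma dist_le_chebR g1 g2 : (exists M, forall g, S g -> `|iota g| <= M) ->
  S g1 -> S g2 -> `|iota g1 - iota g2| <= 2 * chebR iota S.
Proof.
move=> [M SM] Sg1 Sg2.
rewrite -ler_pdivrMl // mulrC; apply: lb_le_inf => [|r [z zr]].
  by exists M, 0 => g Sg; rewrite subr0 SM.
have := ler_distD z (iota g1) (iota g2).
by rewrite [`|z - _|]distrC; have := zr g1 Sg1; have := zr g2 Sg2; lra.
Qed.

End chebyshev_radius.

Section data_norm.
Variables (R : realType) (m : nat).

Lemma mean_cst_le (c : R) : 0 <= c -> m%:R^-1 * \sum_(j < m) c <= c.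
Proof.
move=> c_ge0; rewrite sumr_const card_ord -[c *+ _]mulr_natl mulrA.
by case: m => [|n]; rewrite ?invr0 ?mul0r ?mulVf ?mul1r ?pnatr_eq0.
Qed.

Lemma vnorm_ge0 (v : 'I_m -> R) : 0 <= vnorm v.
Proof. exact: sqrtr_ge0. Qed.

Lemma vnorm_sq (v : 'I_m -> R) : vnorm v ^+ 2 = m%:R^-1 * \sum_(j < m) `|v j| ^+ 2.
Proof. by rewrite sqr_sqrtr // mulr_ge0 ?invr_ge0 ?sumr_ge0. Qed.

Lemma vnorm_le_sq (v : 'I_m -> R) t : 0 <= t -> vnorm v ^+ 2 <= t ^+ 2 -> vnorm v <= t.
Proof. by move=> t_ge0; rewrite ler_pXn2r ?nnegrE ?vnorm_ge0. Qed.

Lemma vnorm_le (v : 'I_m -> R) t : 0 <= t -> (forall j, `|v j| <= t) -> vnorm v <= t.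
Proof.
move=> t_ge0 vt; apply: vnorm_le_sq => //; rewrite vnorm_sq.
apply: le_trans (mean_cst_le (sqr_ge0 t)); rewrite ler_wpM2l ?invr_ge0 //.
by apply: ler_sum => j _; rewrite lerXn2r ?nnegrE.
Qed.

Lemma vnorm_le_shift (u v : 'I_m -> R) s : 0 <= s ->
  (forall j, `|v j| <= s + `|u j|) -> vnorm v <= 2 * (s + vnorm u).
Proof.
move=> s_ge0 vsu; have u_ge0 := vnorm_ge0 u.
apply: vnorm_le_sq; first by rewrite mulr_ge0 ?addr_ge0.
have sum_le : vnorm v ^+ 2 <= 2 * s ^+ 2 + 2 * vnorm u ^+ 2.
  rewrite !vnorm_sq.
  apply: (@le_trans _ _ (m%:R^-1 * \sum_(j < m) (2 * s ^+ 2 + 2 * `|u j| ^+ 2))).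
    rewrite ler_wpM2l ?invr_ge0 // ler_sum // => j _.
    have vj := vsu j; have := sqr_ge0 (s - `|u j|); have := normr_ge0 (v j).
    rewrite !expr2 => v_ge0 su; nra.
  rewrite big_split /= mulrDr; apply: lerD; last by rewrite -mulr_sumr mulrCA.
  exact/mean_cst_le/mulr_ge0/sqr_ge0.
by apply: le_trans sum_le _; nra.
Qed.

End data_norm.

Section embedding.
Variables (R : realType) (d : nat) (Om : set 'rV[R]_d).
Variables (X : normedModType R) (iota : ('rV[R]_d -> R) -> X) (CX : R).
Hypothesis iotaD :
  forall g h, contOn Om g -> contOn Om h -> iota (g \+ h) = iota g + iota h.
Hypothesis iotaZ :
  forall (a : R) g, contOn Om g -> iota (fun y => a * g y) = a *: iota g.
Hypothesis iota_le : forall g, contOn Om g -> `|iota g| <= CX * supnorm Om g.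

Lemma iotaB g h : contOn Om g -> contOn Om h -> iota (g \- h) = iota g - iota h.
Proof.
move=> cg ch; have cNh := contOnZ (a := -1) ch.
rewrite -scaleN1r -iotaZ // -iotaD //.
by congr iota; apply/funext => y /=; rewrite mulN1r.
Qed.

Lemma iota_dist_le g h : contOn Om g -> contOn Om h ->
  `|iota g - iota h| <= CX * supnorm Om (g \- h).
Proof. by move=> cg ch; rewrite -iotaB //; exact/iota_le/contOnB. Qed.

Lemma iota_ubound (S : set ('rV[R]_d -> R)) M : 0 <= CX ->
  (forall g, S g -> contOn Om g) -> (forall g, S g -> forall y, Om y -> `|g y| <= M) ->
  exists r, forall g, S g -> `|iota g| <= r.
Proof.
move=> CX_ge0 S_cont SM; exists (CX * `|M|) => g Sg.
apply: le_trans (iota_le (S_cont g Sg)) _; rewrite ler_wpM2l // supnorm_le // => y.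
by move=> /(SM g Sg) /le_trans; apply; exact: ler_norm.
Qed.

End embedding.

Section recovery.
Variables (R : realType) (d m : nat) (Om : set 'rV[R]_d) (x : 'I_m -> 'rV[R]_d).
Variables (K : set ('rV[R]_d -> R)) (f : 'rV[R]_d -> R).
Hypotheses (x_Om : forall j, Om (x j)) (Kf : K f).

Lemma Knbhd_center e : 0 <= e -> Knbhd x K (lam x f) e f.
Proof.
move=> e_ge0; exists (lam x f) => //=.
by apply: vnorm_le => // j; rewrite /vsub subrr normr0.
Qed.

Lemma Lprime_le g t : 0 <= t -> (forall y, Om y -> `|f y - g y| <= t) ->
  Lprime Om x K (lam x f) g <= 2 * t.
Proof.
move=> t_ge0 fgt.
have data_le : vnorm (vsub (lam x g) (lam x f)) <= t.
  by apply: vnorm_le => // j; rewrite /vsub /lam distrC fgt.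
have dist_le : distC Om g K <= t.
  apply: le_trans (distC_le _ _ Kf) (supnorm_le _ _) => // y Om_y /=.
  by rewrite distrC fgt.
by rewrite /Lprime; lra.
Qed.

Hypotheses (Om_compact : compact Om) (K_cont : forall h, K h -> contOn Om h).

Lemma Lprime_lt_Knbhd fhat r : contOn Om fhat -> Lprime Om x K (lam x f) fhat < r ->
  exists h, [/\ K h, Knbhd x K (lam x f) (2 * r) h & supnorm Om (h \- fhat) < r].
Proof.
move=> fhat_cont; rewrite /Lprime; set a := vnorm _ => Lr.
have a_ge0 : 0 <= a := vnorm_ge0 _.
have [h Kh fhat_h] : exists2 h, K h & supnorm Om (fhat \- h) < r - a.
  by apply: distC_lt; [exists f | lra].
exists h; rewrite supnormBC; split => //; last by lra.
exists (lam x h) => //=.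
have s_ge0 := supnorm_ge0 Om (fhat \- h).
apply: le_trans (vnorm_le_shift (u := vsub (lam x fhat) (lam x f)) s_ge0 _) _.
  move=> j; rewrite /vsub /lam -(subrKA (fhat (x j))).
  apply: le_trans (ler_normD _ _) _; rewrite lerD2r distrC.
  by have := le_supnormB Om_compact fhat_cont (K_cont Kh) (x_Om j).
by rewrite -/a; lra.
Qed.

End recovery.

Unset Implicit Arguments.

Theorem theorem4p5 (R : realType) (d m : nat) (Om : set 'rV[R]_d)
  (X : completeNormedModType R) (iota : ('rV[R]_d -> R) -> X) (CX : R)
  (K : set ('rV[R]_d -> R)) (x : 'I_m -> 'rV[R]_d) (f : 'rV[R]_d -> R)
  (C delta : R) (Sigma : set ('rV[R]_d -> R)) (fhat : 'rV[R]_d -> R) :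
  closure_of_bounded_domain Om ->
  (* C(Omega) embeds linearly, injectively and continuously into X *)
  (forall g h, contOn Om g -> contOn Om h -> iota (g \+ h) = iota g + iota h) ->
  (forall (a : R) g, contOn Om g -> iota (fun y => a * g y) = a *: iota g) ->
  (forall g, contOn Om g -> iota g = 0 -> forall y, Om y -> g y = 0) ->
  (forall g, contOn Om g -> `|iota g| <= CX * supnorm Om g) ->
  compactC Om K ->
  (forall j, Om (x j)) ->
  K f ->
  chebR iota (Kfib x K (lam x f)) != 0 ->
  2 < C -> 0 < delta ->
  CX * (2 * delta) + 2 * chebR iota (Knbhd x K (lam x f) (2 * (2 * delta)))
    <= C * chebR iota (Kfib x K (lam x f)) ->
  (forall g, Sigma g -> contOn Om g) ->
  distCset Om K Sigma < delta ->
  Sigma fhat ->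
  (forall g, Sigma g -> Lprime Om x K (lam x f) fhat <= Lprime Om x K (lam x f) g) ->
  `|iota f - iota fhat| <= C * chebR iota (Kfib x K (lam x f)).
Proof.
move=> Om_dom iotaD iotaZ _ iota_le K_compact x_Om Kf _ C_gt2 delta_gt0 delta_small
  Sigma_cont KSigma_lt Sigma_fhat fhat_min.
have Om_compact := closure_of_bounded_domain_compact Om_dom.
have K_cont := K_compact.1.
have [MK K_le] := compactC_bounded Om_compact K_compact.
have fhat_cont := Sigma_cont _ Sigma_fhat.
have dist_le := iota_dist_le iotaD iotaZ iota_le.
have cheb_ge0 : 0 <= chebR iota (Kfib x K (lam x f)) by apply: (chebR_ge0 iota (g := f)).
have [CX_lt0 | CX_ge0] := ltP CX 0.
  apply: le_trans (dist_le _ _ (K_cont _ Kf) fhat_cont) (le_trans _ (mulr_ge0 _ cheb_ge0)).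
    by rewrite nmulr_rle0 // supnorm_ge0.
  lra.
have [g Sigma_g fg] := distCset_near Om_compact K_le Sigma_fhat fhat_cont Kf KSigma_lt.
have Lg : Lprime Om x K (lam x f) g <= 2 * supnorm Om (f \- g).
  apply: (Lprime_le x_Om Kf (supnorm_ge0 Om (f \- g))) => y Om_y.
  by have := le_supnormB Om_compact (K_cont _ Kf) (Sigma_cont _ Sigma_g) Om_y.
have Lfhat : Lprime Om x K (lam x f) fhat < 2 * delta.
  by apply: le_lt_trans (fhat_min g Sigma_g) (le_lt_trans Lg _); rewrite ltr_pM2l.
have [h [Kh Nh h_fhat]] := Lprime_lt_Knbhd x_Om Kf Om_compact K_cont fhat_cont Lfhat.
have [r K_iota_le] := iota_ubound iota_le CX_ge0 K_cont K_le.
have Nf : Knbhd x K (lam x f) (2 * (2 * delta)) f by apply: Knbhd_center => //; lra.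
have f_h : `|iota f - iota h| <= 2 * chebR iota (Knbhd x K (lam x f) (2 * (2 * delta))).
  by apply: dist_le_chebR Nf Nh; exists r => g' [w _ [Kg' _]]; exact: K_iota_le.
have := ler_wpM2l CX_ge0 (ltW h_fhat).
have := dist_le _ _ (K_cont _ Kh) fhat_cont.
have := ler_distD (iota h) (iota f) (iota fhat).
lra.
Qed.
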